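(* In a combinatorial auction where all bidders play piecewise constant strategies, suppose there is a constant $c\in\mathbb{R}_{\ge0}$ such that every bid $b_j(K)$ of every bidder $j$ on every bundle $K$ (that occurs with positive probability) is an integer multiple of $c$. Then for every bidder $i$, all coordinates of all cell vertices of bidder $i$'s action space are integer multiples of $c$.
   Context: A combinatorial auction sells goods $M$ to bidders $N$; each bidder $i$ bids a vector $b_i\in\mathbb{R}_{\ge0}^r$ on his $r$ bundles of interest (other bundles bid $0$). An allocation gives each bidder one bundle of interest or $\emptyset$, pairwise disjoint; $X(b)$ is the set of allocations maximizing $\sum_i b_i(x_i)$. Bidders' valuations are independent random variables $V_j$ and a strategy $s_j$ maps valuations to bids; it is piecewise constant if it takes finitely many values, so the distribution of $b_{-i}=s_{-i}(V_{-i})$ has finite support. A cell of bidder $i$'s action space $\mathbb{R}_{\ge0}^r$ is a connected region $S$ such that for every $b_{-i}$ with positive probability there exists an allocation $x$ with $x\in X(b_i,b_{-i})$ for all $b_i\in S$; cells are convex polytopes and cell vertices are their vertices. *)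

From HB Require Import structures.
From mathcomp Require Import all_boot all_order all_algebra.
From mathcomp Require Import all_classical all_reals topology normedtype matrix_topology matrix_normedtype.
Set Implicit Arguments. Unset Strict Implicit. Unset Printing Implicit Defensive.
Import Order.TTheory GRing.Theory Num.Theory.
Import numFieldNormedType.Exports.
Local Open Scope classical_set_scope.
Local Open Scope ring_scope.

Section Auction.
Variables (R : realType) (G I : finType) (r : I -> nat).
(* bundle j k : the k-th bundle of interest of bidder j (a set of goods) *)
Variable bundle : forall j : I, 'I_(r j) -> {set G}.

(* An allocation assigns to each bidder one bundle of interest (Some k) or the
   empty bundle (None). *)
Definition allocation := forall j : I, option 'I_(r j).

Definition alloc_set (j : I) (o : option 'I_(r j)) : {set G} :=
  if o is Some k then bundle k else finset.set0.

Definition feasible (x : allocation) : Prop :=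
  forall j k : I, j != k -> (alloc_set (x j) :&: alloc_set (x k) = finset.set0).

(* a bid vector of bidder j : one bid per bundle of interest, empty bundle = 0 *)
Definition bidval (n : nat) (b : 'rV[R]_n) (o : option 'I_n) : R :=
  if o is Some k then b ord0 k else 0.

(* welfare of allocation x for the profile (b_i, b_{-i}); the i-th component of
   the profile bo is ignored, it is replaced by b_i. *)
Definition welfare (i : I) (bi : 'rV[R]_(r i)) (bo : forall j, 'rV[R]_(r j))
    (x : allocation) : R :=
  bidval bi (x i) + \sum_(j | j != i) bidval (bo j) (x j).

Definition optimal (i : I) (bi : 'rV[R]_(r i)) (bo : forall j, 'rV[R]_(r j))
    (x : allocation) : Prop :=
  feasible x /\ forall y, feasible y -> welfare bi bo y <= welfare bi bo x.

Definition nonneg_bid (n : nat) (b : 'rV[R]_n) : Prop := forall k, 0 <= b ord0 k.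

(* Bsupp j : the (finite) set of bids of bidder j occurring with positive
   probability, i.e. the support of s_j(V_j). *)
Variable Bsupp : forall j : I, seq 'rV[R]_(r j).

Definition pos_prob_others (i : I) (bo : forall j, 'rV[R]_(r j)) : Prop :=
  forall j, j != i -> bo j \in Bsupp j.

Definition cell_property (i : I) (S : set 'rV[R]_(r i)) : Prop :=
  S `<=` [set b | nonneg_bid b] /\
  forall bo, pos_prob_others i bo ->
    exists x : allocation, forall bi, S bi -> optimal bi bo x.

Definition is_cell (i : I) (S : set 'rV[R]_(r i)) : Prop :=
  S !=set0 /\ connected S /\ cell_property S /\
  forall T, S `<=` T -> connected T -> cell_property T -> T = S.

End Auction.

Definition is_vertex (R : realType) (n : nat) (S : set 'rV[R]_n) (v : 'rV[R]_n) : Prop :=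
  S v /\ forall a b t, S a -> S b -> 0 < t -> t < 1 ->
    v = (1 - t) *: a + t *: b -> a = b.

Definition int_multiple (R : realType) (c x : R) : Prop :=
  exists z : int, x = z%:~R * c.

From HB Require Import structures.
From mathcomp Require Import all_boot all_order all_algebra.
From mathcomp Require Import all_classical all_reals topology normedtype matrix_topology matrix_normedtype.
From mathcomp Require Import ring lra.
Set Implicit Arguments. Unset Strict Implicit. Unset Printing Implicit Defensive.
Import Order.TTheory GRing.Theory Num.Theory.
Import numFieldNormedType.Exports.
Local Open Scope classical_set_scope.
Local Open Scope ring_scope.

(* If v_k is not in cZ, let d be the indicator of the coordinates q with
   v_q = v_k mod c, and move v to v + t d.  Bid differences lying in cZ do not
   change, and the others are at positive distance from the multiples of c
   below them, so for |t| small every inequality "multiple of c <= difference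
   of two bids" survives.  Nonnegativity and the welfare comparisons defining
   the optimal allocations are such inequalities, since the bids of the other
   bidders lie in cZ.  Thus a short segment through v can be added to S
   without losing the cell property; by maximality it lies in S, so v is the
   midpoint of two points of S and not a vertex. *)

Section IntMultiple.
Variables (R : realType) (c : R).

Lemma int_multiple0 : int_multiple c 0.
Proof. by exists 0; rewrite mul0r. Qed.

Lemma int_multipleD x y :
  int_multiple c x -> int_multiple c y -> int_multiple c (x + y).
Proof. by move=> [a ->] [b ->]; exists (a + b); rewrite intrD mulrDl. Qed.

Lemma int_multipleN x : int_multiple c x -> int_multiple c (- x).
Proof. by move=> [a ->]; exists (- a); rewrite intrN mulNr. Qed.

Lemma int_multipleB x y :
  int_multiple c x -> int_multiple c y -> int_multiple c (x - y).
Proof. by move=> mx my; apply/int_multipleD/int_multipleN. Qed.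

Lemma int_multiple_sum (T : Type) (s : seq T) (P : pred T) (F : T -> R) :
  (forall t, P t -> int_multiple c (F t)) ->
  int_multiple c (\sum_(t <- s | P t) F t).
Proof.
move=> mF; apply: (big_ind (int_multiple c)) => //.
  exact: int_multiple0.
exact: int_multipleD.
Qed.

Lemma int_multiple_congr x y z : int_multiple c (x - y) ->
  int_multiple c (x - z) <-> int_multiple c (y - z).
Proof.
move=> mxy; split=> m.
  have -> : y - z = (x - z) - (x - y) by ring.
  exact: int_multipleB.
have -> : x - z = (x - y) + (y - z) by ring.
exact: int_multipleD.
Qed.

Hypothesis c_ge0 : 0 <= c.

Lemma int_multiple_gap u : ~ int_multiple c u ->
  exists2 g : R, 0 < g & forall A, int_multiple c A -> A <= u -> A + g <= u.
Proof.
move=> nmu; have [c0|c_neq0] := eqVneq c 0.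
  have u_neq0 : u != 0 by apply/eqP => u0; apply: nmu; rewrite u0; exact: int_multiple0.
  exists `|u|; first by rewrite normr_gt0.
  by move=> A [z ->]; rewrite c0 mulr0 add0r => /ger0_norm ->.
have c_gt0 : 0 < c by rewrite lt_def c_neq0.
pose m := (Num.floor (u / c))%:~R * c.
have m_le : m <= u by rewrite -ler_pdivlMr // floor_le.
exists (u - m).
  rewrite subr_gt0 lt_def m_le andbT; apply/eqP => mu.
  by apply: nmu; exists (Num.floor (u / c)).
move=> A [z ->] Au; suff : z%:~R * c <= m by lra.
by rewrite ler_pM2r // ler_int floor_ge_int ler_pdivlMr.
Qed.

Lemma int_multiple_uniform_gap (s : seq R) : exists2 e : R, 0 < e &
  forall u, u \in s -> ~ int_multiple c u ->
  forall A, int_multiple c A -> A <= u -> A + e <= u.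
Proof.
elim: s => [|u s [e e_gt0 gap_s]]; first by exists 1.
have [mu|nmu] := pselect (int_multiple c u).
  exists e => // w; rewrite inE => /predU1P[-> //|]; exact: gap_s.
have [g g_gt0 gap_u] := int_multiple_gap nmu.
exists (Order.min e g); first by rewrite lt_min e_gt0 g_gt0.
move=> w; rewrite inE => /predU1P[-> _ A mA Au|ws nmw A mA Aw].
  by apply: le_trans (gap_u A mA Au); rewrite lerD2l ge_min lexx orbT.
by apply: le_trans (gap_s w ws nmw A mA Aw); rewrite lerD2l ge_min lexx.
Qed.

End IntMultiple.

Lemma segment_connected (R : realType) (V : normedModType R) (v d : V) (e : R) :
  connected ((fun t : R => v + t *: d) @` [set` `[- e, e]]).
Proof.
apply: connected_continuous_connected.
  exact/connected_intervalP/interval_is_interval.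
apply: continuous_subspaceT => t.
apply: cvgD; first exact: cvg_cst.
exact: cvgZr_tmp.
Qed.

Lemma is_vertex_midpoint (R : realType) (n : nat) (S : set 'rV[R]_n) v d :
  is_vertex S v -> S (v + d) -> S (v - d) -> d = 0.
Proof.
move=> [_ vext] Spd Smd.
have v_mid : v = (1 - 1 / 2) *: (v - d) + 1 / 2 *: (v + d).
  by apply/matrixP => p q; rewrite !mxE; field.
have /matrixP dd := vext _ _ (1 / 2) Smd Spd ltac:(lra) ltac:(lra) v_mid.
by apply/matrixP => p q; have := dd p q; rewrite !mxE; lra.
Qed.

Section Perturbation.
Variables (R : realType) (c : R) (n : nat).
Implicit Types (v w d : 'rV[R]_n) (k : 'I_n).

Definition preserves_lattice_bounds v w :=
  forall a b A, int_multiple c A ->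
  A <= bidval v a - bidval v b -> A <= bidval w a - bidval w b.

Lemma preserves_nonneg_bid v w :
  preserves_lattice_bounds v w -> nonneg_bid v -> nonneg_bid w.
Proof.
move=> pvw v_ge0 q; have := pvw (Some q) None 0 (int_multiple0 c).
by rewrite /= !subr0; apply.
Qed.

Lemma bidvalDZ v d (t : R) o : bidval (v + t *: d) o = bidval v o + t * bidval d o.
Proof. by case: o => [q|] /=; rewrite ?mxE ?mulr0 ?addr0. Qed.

Definition congruence_dir v k : 'rV[R]_n :=
  \row_q (if `[< int_multiple c (v ord0 q - v ord0 k) >] then 1 else 0).

Lemma bidval_congruence_dir v k o : ~ int_multiple c (v ord0 k) ->
  bidval (congruence_dir v k) o =
  if `[< int_multiple c (bidval v o - v ord0 k) >] then 1 else 0.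
Proof.
case: o => [q|] nmk /=; first by rewrite mxE.
case: asboolP => // m0k; case: nmk.
by have := int_multipleN m0k; rewrite sub0r opprK.
Qed.

Lemma congruence_dir_self v k : congruence_dir v k ord0 k = 1.
Proof.
by rewrite mxE; case: asboolP => // -[]; rewrite subrr; exact: int_multiple0.
Qed.

Hypothesis c_ge0 : 0 <= c.

Lemma congruence_dir_preserves v k : ~ int_multiple c (v ord0 k) ->
  exists2 e : R, 0 < e & forall t : R, `|t| <= e ->
  preserves_lattice_bounds v (v + t *: congruence_dir v k).
Proof.
move=> nmk; pose diff (p : option 'I_n * option 'I_n) := bidval v p.1 - bidval v p.2.
have [e e_gt0 gap] := int_multiple_uniform_gap c_ge0 (codom diff).
exists e => // t te a b A mA Auv; rewrite !bidvalDZ !bidval_congruence_dir //.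
have /andP[te1 te2] : - e <= t <= e by rewrite -ler_norml.
have [mab|nmab] := pselect (int_multiple c (bidval v a - bidval v b)).
  by have /asbool_equiv_eq -> := int_multiple_congr (v ord0 k) mab; case: ifP; lra.
have := gap _ (codom_f diff (a, b)) nmab A mA Auv.
by rewrite /diff /=; do 2 case: asboolP => _; lra.
Qed.

End Perturbation.

Section CellExtension.
Variables (R : realType) (G I : finType) (r : I -> nat).
Variables (bundle : forall j : I, 'I_(r j) -> {set G}).
Variables (Bsupp : forall j : I, seq 'rV[R]_(r j)) (c : R).
Hypothesis bids_int_multiple :
  forall j b k, b \in Bsupp j -> int_multiple c (b ord0 k).
Variable i : I.
Implicit Types (v w : 'rV[R]_(r i)) (S T : set 'rV[R]_(r i)).

Lemma others_welfare_int_multiple bo (x : allocation r) :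
  pos_prob_others Bsupp i bo ->
  int_multiple c (\sum_(j | j != i) bidval (bo j) (x j)).
Proof.
move=> bo_supp; apply: int_multiple_sum => j ji.
case: (x j) => [q|] /=; last exact: int_multiple0.
exact/bids_int_multiple/bo_supp.
Qed.

Lemma preserves_optimal v w bo x : pos_prob_others Bsupp i bo ->
  preserves_lattice_bounds c v w ->
  optimal bundle v bo x -> optimal bundle w bo x.
Proof.
move=> bo_supp pvw [feas_x opt_x]; split=> // y feas_y.
have := opt_x y feas_y; rewrite /welfare => wyx.
have m := int_multipleB (others_welfare_int_multiple y bo_supp)
                        (others_welfare_int_multiple x bo_supp).
have := pvw (x i) (y i) _ m ltac:(lra); lra.
Qed.

Lemma cell_property_setU S T v :
  cell_property bundle Bsupp S -> S v ->
  (forall w, T w -> preserves_lattice_bounds c v w) ->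
  cell_property bundle Bsupp (S `|` T).
Proof.
move=> [S_ge0 S_opt] Sv pT; split.
  by move=> w [/S_ge0 //|Tw]; apply: preserves_nonneg_bid (pT w Tw) (S_ge0 v Sv).
move=> bo bo_supp; have [x opt_x] := S_opt bo bo_supp.
exists x => w [/opt_x //|Tw].
exact: preserves_optimal bo_supp (pT w Tw) (opt_x v Sv).
Qed.

Lemma is_cell_absorb S T v : is_cell bundle Bsupp S -> S v -> T v -> connected T ->
  (forall w, T w -> preserves_lattice_bounds c v w) -> T `<=` S.
Proof.
move=> [_ [S_conn [S_cell S_max]]] Sv Tv T_conn pT.
have SUT_conn : connected (S `|` T) by apply: connectedU => //; exists v.
have <- := S_max _ (@subsetUl _ S T) SUT_conn (cell_property_setU S_cell Sv pT).
exact: subsetUr.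
Qed.

End CellExtension.

Theorem lemma1 (R : realType) (G I : finType) (r : I -> nat)
  (bundle : forall j : I, 'I_(r j) -> {set G})
  (Bsupp : forall j : I, seq 'rV[R]_(r j)) (c : R) :
  0 <= c ->
  (forall j, Bsupp j != [::]) ->
  (forall j b, b \in Bsupp j -> nonneg_bid b) ->
  (forall j b k, b \in Bsupp j -> int_multiple c (b ord0 k)) ->
  forall (i : I) (S : set 'rV[R]_(r i)),
    is_cell bundle Bsupp S ->
    forall v, is_vertex S v -> forall k, int_multiple c (v ord0 k).
Proof.
move=> c_ge0 _ _ bids_int i S S_cell v v_vert k.
apply: contrapT => nmk.
have [e e_gt0 pres] := congruence_dir_preserves c_ge0 nmk.
pose d := congruence_dir c v k.
pose seg := (fun t => v + t *: d) @` [set` `[- e, e]].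
have seg_at t : `|t| <= e -> seg (v + t *: d).
  by rewrite ler_norml => te; exists t; rewrite ?in_itv.
have seg_S : seg `<=` S.
  have seg_conn : connected seg by exact: segment_connected.
  apply: (is_cell_absorb bids_int S_cell (proj1 v_vert) _ seg_conn).
    by rewrite -[v]addr0 -(scale0r d); apply: seg_at; rewrite normr0 ltW.
  by move=> w [t]; rewrite /= in_itv /= -ler_norml => /pres pt <-.
have : e *: d = 0.
  apply: is_vertex_midpoint v_vert (seg_S _ (seg_at e _)) _.
    by rewrite gtr0_norm.
  by rewrite -scaleNr; apply/seg_S/seg_at; rewrite normrN gtr0_norm.
move/matrixP/(_ ord0 k); rewrite mxE [d _ _]congruence_dir_self mxE mulr1.
by apply/eqP; rewrite gt_eqF.
Qed.
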